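(* Let $q,m,p,n\ge1$, let $\mathcal{L}:\mathbb{R}^q\to\mathbb{R}$ be differentiable, $\eta>0$, $K\ge1$, $\omega^{(0)}\in\mathbb{R}^q$, and $\omega^{(k+1)}=\omega^{(k)}-\eta\nabla\mathcal{L}(\omega^{(k)})$ for $k=0,\dots,K-1$. Let $\Phi:\mathbb{R}^q\to\mathbb{R}^{m\times p}$ satisfy $\|\Phi(\omega)-\Phi(\omega')\|\le G\|\omega-\omega'\|$, and let $A:\mathbb{R}^q\to\mathbb{R}^{n\times p}$ satisfy $\|A(\omega)-A(\omega')\|\le\beta\|\Phi(\omega)-\Phi(\omega')\|$ for all $\omega,\omega'\in\mathbb{R}^q$. Let $b\in\mathbb{R}^n$, $\lambda\ge0$, and define \[ E_{\mathrm{phys}}(\omega):=\big\|\big(I_n-A(\omega)(A(\omega)^\top A(\omega)+\lambda I_p)^{-1}A(\omega)^\top\big)b\big\|_2 . \] Assume either $\lambda>0$, or $\lambda=0$ and $\sigma_{\min}(A(\omega^{(k)}))\ge\gamma>0$ for all $0\le k\le K$. Then there is a constant $C_{\mathrm{cond}}\ge1$, depending only on $\lambda$ (resp. $\gamma$), on $\max_{0\le k\le K}\|A(\omega^{(k)})\|$ and on $\|b\|_2$, such that \[ E_{\mathrm{phys}}(\omega^{(K)})\le E_{\mathrm{phys}}(\omega^{(0)})+C_{\mathrm{cond}}\sum_{k=0}^{K-1}\big\|A(\omega^{(k+1)})-A(\omega^{(k)})\big\|\le E_{\mathrm{phys}}(\omega^{(0)})+C_{\mathrm{cond}}\,\beta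 G\sum_{k=0}^{K-1}\big\|\omega^{(k+1)}-\omega^{(k)}\big\|, \] and consequently \[ E_{\mathrm{phys}}(\omega^{(K)})\le E_{\mathrm{phys}}(\omega^{(0)})+C_{\mathrm{cond}}\,\beta G\,\sqrt{K}\Big(\sum_{k=0}^{K-1}\big\|\omega^{(k+1)}-\omega^{(k)}\big\|^2\Big)^{1/2}. \]
   Context: $\|\cdot\|$ is the Euclidean norm on vectors and the spectral norm on matrices; $\sigma_{\min}$ is the smallest of the $p$ singular values. Interpretation: $\omega$ are network parameters up to the penultimate layer, $\Phi(\omega)$ the penultimate-feature design matrix, and $A(\omega)\theta=b$ the linear system obtained by linearizing the PDE, boundary and initial conditions of a task in the last-layer weights $\theta$; the physics-informed head is $\theta^\ast(\omega)=(A(\omega)^\top A(\omega)+\lambda I)^{-1}A(\omega)^\top b$. When $\lambda=0$ (full column rank), $E_{\mathrm{phys}}(\omega)=\min_\theta\|A(\omega)\theta-b\|_2$. *)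

From HB Require Import structures.
From mathcomp Require Import all_boot all_order all_algebra.
From mathcomp Require Import all_classical all_reals all_analysis.
Set Implicit Arguments. Unset Strict Implicit. Unset Printing Implicit Defensive.
Import Order.TTheory GRing.Theory Num.Theory.
Import numFieldNormedType.Exports.
Local Open Scope classical_set_scope.
Local Open Scope ring_scope.

Definition vnorm (R : realType) (k : nat) (v : 'cV[R]_k) : R :=
  Num.sqrt (\sum_(i < k) (v i 0) ^+ 2).

Definition specnorm (R : realType) (n p : nat) (M : 'M[R]_(n, p)) : R :=
  sup [set vnorm (M *m x) | x in [set x : 'cV[R]_p | vnorm x <= 1]].

(* Smallest of the p singular values of M : 'M_(n,p)
   (variational / Courant-Fischer form: min over unit vectors of |M x|). *)
Definition sigma_min (R : realType) (n p : nat) (M : 'M[R]_(n, p)) : R :=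
  inf [set vnorm (M *m x) | x in [set x : 'cV[R]_p | vnorm x = 1]].

Definition grad (R : realType) (q : nat) (L : 'cV[R]_q -> R^o) (w : 'cV[R]_q)
  : 'cV[R]_q := \col_(i < q) ('d L w (delta_mx i 0)).

Definition Ephys (R : realType) (n p : nat) (lam : R) (A : 'M[R]_(n, p))
  (b : 'cV[R]_n) : R :=
  vnorm ((1%:M - A *m invmx (A^T *m A + lam%:M) *m A^T) *m b).

From HB Require Import structures.
From mathcomp Require Import all_boot all_order all_algebra.
From mathcomp Require Import all_classical all_reals all_analysis.
From mathcomp Require Import lra.
Import Order.TTheory GRing.Theory Num.Theory.
Import numFieldNormedType.Exports.
Local Open Scope classical_set_scope.
Local Open Scope ring_scope.
Set Implicit Arguments. Unset Strict Implicit. Unset Printing Implicit Defensive.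

(* Write N(A) = A^T A + lam I, theta(A) = N(A)^-1 A^T b and r(A) = b - A theta(A),
   so that E_phys = |r(A)|.  If |z| <= kap |(A; sqrt lam I) z| for all z (with
   kap = lam^(-1/2), resp. kap = 1/gam), then |A N^-1| <= kap, |N^-1 A^T| <= kap and
   |I - A N^-1 A^T| <= 1, and with D = A2 - A1 the identity
     r(A1) - r(A2) = A2 N(A2)^-1 D^T r(A1) + (I - A2 N(A2)^-1 A2^T) D theta(A1)
   shows that E_phys is Lipschitz in A with constant 2 kap |b|.  Telescoping along
   the iterates gives the first inequality with C_cond = 1 + 2 kap |b|, the
   Lipschitz bound for A o Phi the second, and Cauchy-Schwarz the third. *)

Lemma le_of_sqr_le_mul (R : realDomainType) (a t : R) : 0 <= t -> a ^+ 2 <= a * t -> a <= t.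
Proof. by move=> t_ge0 le_a; nra. Qed.

Section EuclideanNorm.
Variables (R : realType) (k : nat).
Implicit Types (u v w : 'cV[R]_k) (a : R).

Definition dot u v : R := (u^T *m v) 0 0.

Lemma dotE u v : dot u v = \sum_(i < k) u i 0 * v i 0.
Proof. by rewrite /dot !mxE; apply: eq_bigr => i _; rewrite !mxE. Qed.

Lemma dotC u v : dot u v = dot v u.
Proof. by rewrite !dotE; apply: eq_bigr => i _; rewrite mulrC. Qed.

Lemma dotDr u v w : dot u (v + w) = dot u v + dot u w.
Proof. by rewrite /dot mulmxDr mxE. Qed.

Lemma dotNr u v : dot u (- v) = - dot u v.
Proof. by rewrite /dot mulmxN mxE. Qed.

Lemma dotBr u v w : dot u (v - w) = dot u v - dot u w.
Proof. by rewrite dotDr dotNr. Qed.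

Lemma dotZr a u v : dot u (a *: v) = a * dot u v.
Proof. by rewrite /dot -scalemxAr mxE. Qed.

Lemma dotDl u v w : dot (v + w) u = dot v u + dot w u.
Proof. by rewrite dotC dotDr !(dotC u). Qed.

Lemma dotBl u v w : dot (v - w) u = dot v u - dot w u.
Proof. by rewrite dotC dotBr !(dotC u). Qed.

Lemma dotZl a u v : dot (a *: v) u = a * dot v u.
Proof. by rewrite dotC dotZr dotC. Qed.

Lemma dot0l u : dot 0 u = 0.
Proof. by rewrite /dot trmx0 mul0mx mxE. Qed.

Lemma dot_ge0 u : 0 <= dot u u.
Proof. by rewrite dotE; apply: sumr_ge0 => i _; rewrite -expr2 sqr_ge0. Qed.

Lemma dot_eq0 u : (dot u u == 0) = (u == 0).
Proof.
apply/idP/eqP => [|->]; last by rewrite dot0l.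
rewrite dotE psumr_eq0 => [/allP u0|i _]; last by rewrite -expr2 sqr_ge0.
apply/matrixP => i j; rewrite (ord1 j) mxE.
by have /implyP/(_ isT) := u0 i (mem_index_enum i); rewrite -expr2 sqrf_eq0 => /eqP.
Qed.

Lemma vnorm_ge0 u : 0 <= vnorm u.
Proof. exact: sqrtr_ge0. Qed.

Lemma vnorm_sqr u : vnorm u ^+ 2 = dot u u.
Proof.
rewrite sqr_sqrtr; last by apply: sumr_ge0 => i _; rewrite sqr_ge0.
by rewrite dotE; apply: eq_bigr => i _; rewrite expr2.
Qed.

Lemma vnorm_eq0 u : (vnorm u == 0) = (u == 0).
Proof. by rewrite -sqrf_eq0 vnorm_sqr dot_eq0. Qed.

Lemma vnorm0 : vnorm (0 : 'cV[R]_k) = 0.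
Proof. by apply/eqP; rewrite vnorm_eq0. Qed.

Lemma vnormZ a u : vnorm (a *: u) = `|a| * vnorm u.
Proof.
apply/eqP; rewrite -(@eqrXn2 _ 2) ?mulr_ge0 ?vnorm_ge0 //.
by rewrite exprMn !vnorm_sqr dotZl dotZr mulrA -expr2 real_normK ?num_real.
Qed.

Lemma vnormN u : vnorm (- u) = vnorm u.
Proof. by rewrite -scaleN1r vnormZ normrN1 mul1r. Qed.

Lemma cauchy_schwarz u v : dot u v <= vnorm u * vnorm v.
Proof.
have [/eqP|u0] := eqVneq (vnorm u) 0.
  by rewrite vnorm_eq0 => /eqP->; rewrite dot0l vnorm0 mul0r.
have [/eqP|v0] := eqVneq (vnorm v) 0.
  by rewrite vnorm_eq0 => /eqP->; rewrite dotC dot0l vnorm0 mulr0.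
have uv_gt0 : 0 < vnorm u * vnorm v by rewrite mulr_gt0 // lt0r ?u0 ?v0 vnorm_ge0.
(* [0 <= | |v| u - |u| v |^2 = 2 |u| |v| (|u| |v| - dot u v)] *)
have := dot_ge0 (vnorm v *: u - vnorm u *: v).
rewrite dotBl !dotBr !dotZl !dotZr -!vnorm_sqr (dotC v u) => h.
rewrite -(ler_pM2l uv_gt0); nra.
Qed.

Lemma sqr_dot_le u v : dot u v ^+ 2 <= vnorm u ^+ 2 * vnorm v ^+ 2.
Proof.
have := cauchy_schwarz u v; have := cauchy_schwarz u (- v).
rewrite dotNr vnormN -exprMn; have := mulr_ge0 (vnorm_ge0 u) (vnorm_ge0 v); nra.
Qed.

Lemma ler_vnormD u v : vnorm (u + v) <= vnorm u + vnorm v.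
Proof.
rewrite -ler_sqr ?nnegrE ?addr_ge0 ?vnorm_ge0 //.
rewrite vnorm_sqr dotDl !dotDr -!vnorm_sqr (dotC v u).
have := cauchy_schwarz u v; nra.
Qed.

Lemma vnorm_normalize u : vnorm u != 0 -> vnorm ((vnorm u)^-1 *: u) = 1.
Proof. by move=> u0; rewrite vnormZ ger0_norm ?invr_ge0 ?vnorm_ge0 // mulVf. Qed.

End EuclideanNorm.

Lemma dot_mulmxl (R : realType) (k l : nat) (M : 'M[R]_(k, l)) u v :
  dot (M *m u) v = dot u (M^T *m v).
Proof. by rewrite /dot trmx_mul mulmxA. Qed.

Lemma sum_le_sqrt_card_sum_sqr (R : realType) (K : nat) (f : 'I_K -> R) :
  \sum_(k < K) f k <= Num.sqrt K%:R * Num.sqrt (\sum_(k < K) f k ^+ 2).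
Proof.
have := cauchy_schwarz (const_mx 1 : 'cV[R]_K) (\col_k f k).
have -> : vnorm (const_mx 1 : 'cV[R]_K) = Num.sqrt K%:R.
  by rewrite /vnorm (eq_bigr (fun _ => 1)) ?sumr_const ?card_ord // => i _; rewrite mxE expr1n.
rewrite dotE /vnorm (eq_bigr f) => [|i _]; last by rewrite !mxE mul1r.
suff -> : \sum_(i < K) (\col_k f k) i 0 ^+ 2 = \sum_(k < K) f k ^+ 2 by [].
by apply: eq_bigr => i _; rewrite mxE.
Qed.

Section OperatorBounds.
Variables (R : realType) (k l : nat).
Implicit Types (M : 'M[R]_(k, l)).

Lemma vnorm_mulmx_le_frobenius M (x : 'cV[R]_l) :
  vnorm (M *m x) <= Num.sqrt (\sum_(i < k) vnorm (row i M)^T ^+ 2) * vnorm x.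
Proof.
have F_ge0 : 0 <= \sum_(i < k) vnorm (row i M)^T ^+ 2.
  by apply: sumr_ge0 => i _; apply: sqr_ge0.
rewrite -ler_sqr ?nnegrE ?mulr_ge0 ?vnorm_ge0 ?sqrtr_ge0 //.
rewrite exprMn (sqr_sqrtr F_ge0) vnorm_sqr dotE mulr_suml; apply: ler_sum => i _.
have -> : (M *m x) i 0 = dot (row i M)^T x.
  by rewrite dotE mxE; apply: eq_bigr => j _; rewrite !mxE.
by rewrite -expr2 sqr_dot_le.
Qed.

Lemma specnorm_has_sup M :
  has_sup [set vnorm (M *m x) | x in [set x : 'cV[R]_l | vnorm x <= 1]].
Proof.
split; first by exists (vnorm (M *m 0)), 0; rewrite //= vnorm0.
exists (Num.sqrt (\sum_(i < k) vnorm (row i M)^T ^+ 2)) => _ [x /= x1 <-].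
apply: (le_trans (vnorm_mulmx_le_frobenius M x)).
by rewrite ler_piMr ?sqrtr_ge0.
Qed.

Lemma specnorm_ge0 M : 0 <= specnorm M.
Proof.
apply: (le_trans (vnorm_ge0 (M *m 0))); apply: sup_upper_bound.
  exact: specnorm_has_sup.
by exists 0; rewrite //= vnorm0 ler01.
Qed.

Lemma vnorm_mulmx_le M (x : 'cV[R]_l) : vnorm (M *m x) <= specnorm M * vnorm x.
Proof.
have [/eqP|x0] := eqVneq (vnorm x) 0.
  by rewrite vnorm_eq0 => /eqP->; rewrite mulmx0 !vnorm0 mulr0.
have x_gt0 : 0 < vnorm x by rewrite lt0r x0 vnorm_ge0.
rewrite -ler_pdivrMr // mulrC -[(vnorm x)^-1]ger0_norm ?invr_ge0 ?vnorm_ge0 //.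
rewrite -vnormZ scalemxAr; apply: sup_upper_bound; first exact: specnorm_has_sup.
by exists ((vnorm x)^-1 *: x); rewrite //= vnorm_normalize.
Qed.

Lemma vnorm_trmx_mulmx_le M (y : 'cV[R]_k) : vnorm (M^T *m y) <= specnorm M * vnorm y.
Proof.
apply: le_of_sqr_le_mul; first by rewrite mulr_ge0 ?specnorm_ge0 ?vnorm_ge0.
rewrite vnorm_sqr dot_mulmxl trmxK; apply: (le_trans (cauchy_schwarz _ _)).
have := vnorm_mulmx_le M (M^T *m y); have := vnorm_ge0 y; nra.
Qed.

Lemma sigma_min_mul_vnorm_le M (z : 'cV[R]_l) : sigma_min M * vnorm z <= vnorm (M *m z).
Proof.
have [/eqP|z0] := eqVneq (vnorm z) 0.
  by rewrite vnorm_eq0 => /eqP->; rewrite mulmx0 !vnorm0 mulr0.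
have z_gt0 : 0 < vnorm z by rewrite lt0r z0 vnorm_ge0.
rewrite -ler_pdivlMr // -[(vnorm z)^-1]ger0_norm ?invr_ge0 ?vnorm_ge0 //.
rewrite mulrC -vnormZ scalemxAr; apply: ge_inf.
  by exists 0 => _ [x _ <-]; apply: vnorm_ge0.
by exists ((vnorm z)^-1 *: z); rewrite //= vnorm_normalize.
Qed.
End OperatorBounds.

Definition ridge_mx (R : realType) (n p : nat) (A : 'M[R]_(n, p)) (lam : R) : 'M[R]_p :=
  A^T *m A + lam%:M.

Definition ridge_fit (R : realType) (n p : nat) (A : 'M[R]_(n, p)) (lam : R) (b : 'cV[R]_n) :=
  invmx (ridge_mx A lam) *m (A^T *m b).

Definition ridge_residual (R : realType) (n p : nat) (A : 'M[R]_(n, p)) (lam : R)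
    (b : 'cV[R]_n) :=
  b - A *m ridge_fit A lam b.

(* [1 / kap] is a lower bound for the smallest singular value of the stacked
   matrix [A; sqrt lam I]. *)
Definition ridge_coercive (R : realType) (n p : nat) (A : 'M[R]_(n, p)) (lam kap : R) :=
  forall z : 'cV[R]_p, vnorm z ^+ 2 <= kap ^+ 2 * (vnorm (A *m z) ^+ 2 + lam * vnorm z ^+ 2).

Lemma Ephys_ridge_residual (R : realType) (n p : nat) (A : 'M[R]_(n, p)) lam b :
  Ephys lam A b = vnorm (ridge_residual A lam b).
Proof. by rewrite /Ephys /ridge_residual /ridge_fit /ridge_mx mulmxBl mul1mx !mulmxA. Qed.

Section RidgeSolve.
Variables (R : realType) (n p : nat) (A : 'M[R]_(n, p)) (lam kap : R).
Hypothesis coerA : ridge_coercive A lam kap.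
Implicit Types (z u : 'cV[R]_p).

Lemma ridge_mxE z : ridge_mx A lam *m z = A^T *m (A *m z) + lam *: z.
Proof. by rewrite /ridge_mx mulmxDl -mulmxA mul_scalar_mx. Qed.

Lemma dot_ridge_mx z : dot z (ridge_mx A lam *m z) = vnorm (A *m z) ^+ 2 + lam * vnorm z ^+ 2.
Proof. by rewrite ridge_mxE dotDr dotZr -dot_mulmxl !vnorm_sqr. Qed.

Lemma trmx_ridge_mx : (ridge_mx A lam)^T = ridge_mx A lam.
Proof. by rewrite /ridge_mx linearD /= trmx_mul trmxK tr_scalar_mx. Qed.

Lemma ridge_mx_unit : ridge_mx A lam \in unitmx.
Proof.
rewrite unitmxE unitfE; apply/negP => /det0P [v v0 vN0].
have : ridge_mx A lam *m v^T = 0.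
  by rewrite -[ridge_mx A lam]trmx_ridge_mx -trmx_mul vN0 trmx0.
move=> /(congr1 (dot v^T)); rewrite dot_ridge_mx dotC dot0l => Q0.
have := coerA v^T; rewrite Q0 mulr0 => vT_le0.
have /eqP : vnorm v^T ^+ 2 = 0 by apply/le_anti; rewrite vT_le0 sqr_ge0.
by rewrite sqrf_eq0 vnorm_eq0 -trmx0 (inj_eq trmx_inj) (negPf v0).
Qed.

Lemma ridge_mxK u : ridge_mx A lam *m (invmx (ridge_mx A lam) *m u) = u.
Proof. by rewrite mulmxA mulmxV ?mul1mx // ridge_mx_unit. Qed.

Lemma ridge_mxKV u : invmx (ridge_mx A lam) *m (ridge_mx A lam *m u) = u.
Proof. by rewrite mulmxA mulVmx ?mul1mx // ridge_mx_unit. Qed.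

Hypotheses (lam_ge0 : 0 <= lam) (kap_ge0 : 0 <= kap).

Lemma vnorm_mulmx_ridge_inv_le u : vnorm (A *m (invmx (ridge_mx A lam) *m u)) <= kap * vnorm u.
Proof.
set z := invmx (ridge_mx A lam) *m u.
have Q_le : vnorm (A *m z) ^+ 2 + lam * vnorm z ^+ 2 <= vnorm z * vnorm u.
  by rewrite -dot_ridge_mx ridge_mxK cauchy_schwarz.
have z_le : vnorm z <= kap ^+ 2 * vnorm u.
  apply: le_of_sqr_le_mul; first by rewrite mulr_ge0 ?sqr_ge0 ?vnorm_ge0.
  apply: (le_trans (coerA z)); rewrite [leRHS]mulrCA; apply: ler_wpM2l => //.
  exact: sqr_ge0.
rewrite -ler_sqr ?nnegrE ?mulr_ge0 ?vnorm_ge0 // exprMn.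
apply: le_trans (_ : vnorm z * vnorm u <= _).
  by apply: le_trans Q_le; rewrite lerDl mulr_ge0 ?sqr_ge0.
by rewrite expr2 mulrA ler_wpM2r ?vnorm_ge0.
Qed.

Lemma vnorm_ridge_fit_le b : vnorm (ridge_fit A lam b) <= kap * vnorm b.
Proof.
set z := ridge_fit A lam b.
have Q_le : vnorm (A *m z) ^+ 2 + lam * vnorm z ^+ 2 <= vnorm (A *m z) * vnorm b.
  by rewrite -dot_ridge_mx ridge_mxK -dot_mulmxl cauchy_schwarz.
have Az_le : vnorm (A *m z) <= vnorm b.
  apply: le_of_sqr_le_mul; first exact: vnorm_ge0.
  by apply: le_trans Q_le; rewrite lerDl mulr_ge0 ?sqr_ge0.
rewrite -ler_sqr ?nnegrE ?mulr_ge0 ?vnorm_ge0 // exprMn.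
apply: (le_trans (coerA z)); apply: ler_wpM2l; first exact: sqr_ge0.
have := vnorm_ge0 b; have := vnorm_ge0 (A *m z); nra.
Qed.

Lemma vnorm_ridge_residual_le b : vnorm (ridge_residual A lam b) <= vnorm b.
Proof.
set z := ridge_fit A lam b.
have Q_eq : vnorm (A *m z) ^+ 2 + lam * vnorm z ^+ 2 = dot (A *m z) b.
  by rewrite -dot_ridge_mx ridge_mxK -dot_mulmxl.
rewrite -ler_sqr ?nnegrE ?vnorm_ge0 // vnorm_sqr dotBl !dotBr -!vnorm_sqr (dotC b) -Q_eq.
rewrite -/z; have := mulr_ge0 lam_ge0 (sqr_ge0 (vnorm z)); have := sqr_ge0 (vnorm (A *m z)); lra.
Qed.
End RidgeSolve.

Section RidgePerturbation.
Variables (R : realType) (n p : nat) (A1 A2 : 'M[R]_(n, p)) (lam kap : R) (b : 'cV[R]_n).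
Hypotheses (coer1 : ridge_coercive A1 lam kap) (coer2 : ridge_coercive A2 lam kap).

Let D := A2 - A1.
Let y1 := ridge_fit A1 lam b.
Let r1 := ridge_residual A1 lam b.

Lemma ridge_fit_sub :
  ridge_fit A2 lam b - y1 = invmx (ridge_mx A2 lam) *m (D^T *m r1 - A2^T *m (D *m y1)).
Proof.
rewrite -[LHS](ridge_mxKV coer2); congr (_ *m _).
have normal1 : A1^T *m (A1 *m y1) + lam *: y1 = A1^T *m b.
  by rewrite -ridge_mxE (ridge_mxK coer1).
rewrite mulmxBr (ridge_mxK coer2) ridge_mxE /r1 /ridge_residual -/y1 /D [(A2 - A1)^T]linearB /=.
rewrite !mulmxBl !mulmxBr -normal1.
move: (A2^T *m b) (A2^T *m (A1 *m y1)) (A1^T *m (A1 *m y1)) (A2^T *m (A2 *m y1)) (lam *: y1).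
by move=> a c e f g; apply/matrixP => i j; rewrite !mxE; lra.
Qed.

Lemma ridge_residual_sub :
  r1 - ridge_residual A2 lam b
  = A2 *m (invmx (ridge_mx A2 lam) *m (D^T *m r1)) + ridge_residual A2 lam (D *m y1).
Proof.
set y2 := ridge_fit A2 lam b.
set X := A2 *m (invmx (ridge_mx A2 lam) *m (D^T *m r1)).
set Y := A2 *m ridge_fit A2 lam (D *m y1).
have step : A2 *m y2 - A2 *m y1 = X - Y by rewrite -mulmxBr ridge_fit_sub 2!mulmxBr.
rewrite /ridge_residual -/Y -/y2 /D mulmxBl /r1 /ridge_residual -/y1.
move: step; move: (A2 *m y2) (A2 *m y1) (A1 *m y1) X Y => a c e x y.
by move/matrixP => step; apply/matrixP => i j; have := step i j; rewrite !mxE; lra.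
Qed.

Hypotheses (lam_ge0 : 0 <= lam) (kap_ge0 : 0 <= kap).

Lemma vnorm_ridge_residual_sub_le :
  vnorm (r1 - ridge_residual A2 lam b) <= 2 * kap * vnorm b * specnorm D.
Proof.
have D_ge0 := specnorm_ge0 D.
rewrite ridge_residual_sub; apply: (le_trans (ler_vnormD _ _)).
have first_le : vnorm (A2 *m (invmx (ridge_mx A2 lam) *m (D^T *m r1)))
    <= kap * (specnorm D * vnorm b).
  apply: (le_trans (vnorm_mulmx_ridge_inv_le coer2 lam_ge0 kap_ge0 _)).
  apply: ler_wpM2l => //; apply: (le_trans (vnorm_trmx_mulmx_le _ _)).
  exact/ler_wpM2l/(vnorm_ridge_residual_le coer1 lam_ge0).
have second_le : vnorm (ridge_residual A2 lam (D *m y1)) <= specnorm D * (kap * vnorm b).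
  apply: (le_trans (vnorm_ridge_residual_le coer2 lam_ge0 _)).
  apply: (le_trans (vnorm_mulmx_le _ _)).
  exact/ler_wpM2l/(vnorm_ridge_fit_le coer1 lam_ge0 kap_ge0).
lra.
Qed.

Lemma Ephys_le_add_specnorm_sub :
  Ephys lam A2 b <= Ephys lam A1 b + 2 * kap * vnorm b * specnorm (A2 - A1).
Proof.
rewrite !Ephys_ridge_residual -[ridge_residual A2 lam b](subKr r1).
apply: (le_trans (ler_vnormD _ _)); rewrite lerD2l vnormN.
exact: vnorm_ridge_residual_sub_le.
Qed.
End RidgePerturbation.

Lemma ridge_coercive_pos (R : realType) (n p : nat) (A : 'M[R]_(n, p)) (lam : R) :
  0 < lam -> ridge_coercive A lam (Num.sqrt lam)^-1.
Proof.
move=> lam_gt0 z; rewrite exprVn (sqr_sqrtr (ltW lam_gt0)) mulrDr mulKf ?gt_eqF //.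
by rewrite lerDr mulr_ge0 ?invr_ge0 ?sqr_ge0 ?(ltW lam_gt0).
Qed.

Lemma ridge_coercive_sigma_min (R : realType) (n p : nat) (A : 'M[R]_(n, p)) (gam : R) :
  0 < gam -> gam <= sigma_min A -> ridge_coercive A 0 gam^-1.
Proof.
move=> gam_gt0 gam_le z; rewrite mul0r addr0 exprVn ler_pdivlMl ?exprn_gt0 //.
rewrite -exprMn ler_sqr ?nnegrE ?mulr_ge0 ?vnorm_ge0 ?(ltW gam_gt0) //.
exact: le_trans (ler_wpM2r (vnorm_ge0 z) gam_le) (sigma_min_mul_vnorm_le A z).
Qed.

Lemma Ephys_telescope (R : realType) (n p K : nat) (M : nat -> 'M[R]_(n, p))
    (lam kap C : R) (b : 'cV[R]_n) :
  0 <= lam -> 0 <= kap -> 2 * kap * vnorm b <= C ->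
  (forall k, (k <= K)%N -> ridge_coercive (M k) lam kap) ->
  Ephys lam (M K) b <= Ephys lam (M 0%N) b + C * \sum_(k < K) specnorm (M k.+1 - M k).
Proof.
move=> lam_ge0 kap_ge0 C_ge coerM.
rewrite -lerBlDl -(telescope_sumr (fun k => Ephys lam (M k) b)) // big_mkord mulr_sumr.
apply: ler_sum => k _; rewrite lerBlDl.
apply: (le_trans (Ephys_le_add_specnorm_sub _ (coerM k _) (coerM k.+1 _) lam_ge0 kap_ge0)).
- exact: ltnW.
- by [].
- by rewrite lerD2l ler_wpM2r ?specnorm_ge0.
Qed.

Lemma Ephys_path_bounds (R : realType) (q n p K : nat) (w : nat -> 'cV[R]_q)
    (A : 'cV[R]_q -> 'M[R]_(n, p)) (G beta lam kap C : R) (b : 'cV[R]_n) :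
  0 <= G -> 0 <= beta ->
  (forall x y, specnorm (A x - A y) <= beta * G * vnorm (x - y)) ->
  0 <= lam -> 0 <= kap -> 2 * kap * vnorm b <= C ->
  (forall k, (k <= K)%N -> ridge_coercive (A (w k)) lam kap) ->
  let E := fun x => Ephys lam (A x) b in
  let SA := \sum_(k < K) specnorm (A (w k.+1) - A (w k)) in
  let Sw := \sum_(k < K) vnorm (w k.+1 - w k) in
  let Sw2 := \sum_(k < K) vnorm (w k.+1 - w k) ^+ 2 in
  E (w K) <= E (w 0%N) + C * SA /\
  E (w 0%N) + C * SA <= E (w 0%N) + C * beta * G * Sw /\
  E (w K) <= E (w 0%N) + C * beta * G * Num.sqrt K%:R * Num.sqrt Sw2.
Proof.
move=> G_ge0 beta_ge0 lipA lam_ge0 kap_ge0 C_ge coer E SA Sw Sw2.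
have C_ge0 : 0 <= C by apply: le_trans C_ge; rewrite !mulr_ge0 ?vnorm_ge0.
have E_le : E (w K) <= E (w 0%N) + C * SA.
  exact: Ephys_telescope lam_ge0 kap_ge0 C_ge coer.
have SA_le : SA <= beta * G * Sw.
  by rewrite /SA /Sw mulr_sumr; apply: ler_sum => k _; apply: lipA.
have Sw_le : Sw <= Num.sqrt K%:R * Num.sqrt Sw2 by apply: sum_le_sqrt_card_sum_sqr.
have CSA_le : C * SA <= C * beta * G * Sw.
  by rewrite -!mulrA; apply: ler_wpM2l; rewrite // mulrA.
split => //; split; first by rewrite lerD2l.
apply: (le_trans E_le); rewrite lerD2l; apply: (le_trans CSA_le).
by rewrite -[leRHS]mulrA; apply: ler_wpM2l; rewrite ?mulr_ge0.
Qed.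

Theorem theorem2 (R : realType) :
  exists (Creg Cgam : R -> R -> R -> R),
    (forall x y z, 1 <= Creg x y z) /\ (forall x y z, 1 <= Cgam x y z) /\
    forall (q m p n : nat) (L : 'cV[R]_q -> R^o) (eta : R) (K : nat)
      (w : nat -> 'cV[R]_q) (Phi : 'cV[R]_q -> 'M[R]_(m, p))
      (A : 'cV[R]_q -> 'M[R]_(n, p)) (G beta : R) (b : 'cV[R]_n) (lam : R),
    (1 <= q)%N -> (1 <= m)%N -> (1 <= p)%N -> (1 <= n)%N ->
    (forall x, differentiable L x) ->
    0 < eta -> (1 <= K)%N ->
    (forall k, (k < K)%N -> w k.+1 = w k - eta *: grad L (w k)) ->
    0 <= G -> 0 <= beta ->
    (forall x y, specnorm (Phi x - Phi y) <= G * vnorm (x - y)) ->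
    (forall x y, specnorm (A x - A y) <= beta * specnorm (Phi x - Phi y)) ->
    0 <= lam ->
    let E := fun x => Ephys lam (A x) b in
    let Amax := \big[Num.max/0]_(k < K.+1) specnorm (A (w k)) in
    let SA := \sum_(k < K) specnorm (A (w k.+1) - A (w k)) in
    let Sw := \sum_(k < K) vnorm (w k.+1 - w k) in
    let Sw2 := \sum_(k < K) vnorm (w k.+1 - w k) ^+ 2 in
    let concl := fun C : R =>
      E (w K) <= E (w 0%N) + C * SA /\
      E (w 0%N) + C * SA <= E (w 0%N) + C * beta * G * Sw /\
      E (w K) <= E (w 0%N) + C * beta * G * Num.sqrt K%:R * Num.sqrt Sw2 in
    (0 < lam -> concl (Creg lam Amax (vnorm b))) /\
    (forall gam : R, lam = 0 -> 0 < gam ->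
       (forall k, (k <= K)%N -> gam <= sigma_min (A (w k))) ->
       concl (Cgam gam Amax (vnorm b))).
Proof.
exists (fun x _ z => 1 + 2 * (Num.sqrt x)^-1 * `|z|), (fun x _ z => 1 + 2 * `|x|^-1 * `|z|).
split; first by move=> x y z; rewrite lerDl !mulr_ge0 ?invr_ge0 ?sqrtr_ge0.
split; first by move=> x y z; rewrite lerDl !mulr_ge0 ?invr_ge0.
move=> q m p n L eta K w Phi A G beta b lam _ _ _ _ _ _ _ _ G_ge0 beta_ge0 lipPhi lipA lam_ge0.
move=> E Amax SA Sw Sw2 concl.
have lipAw x y : specnorm (A x - A y) <= beta * G * vnorm (x - y).
  by rewrite -mulrA; apply: (le_trans (lipA x y)); apply: ler_wpM2l.
have C_ge kap : 2 * kap * vnorm b <= 1 + 2 * kap * `|vnorm b|.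
  by rewrite ger0_norm ?vnorm_ge0 // lerDr.
split => [lam_gt0 | gam lam0 gam_gt0 gam_le].
  apply: (Ephys_path_bounds (kap := (Num.sqrt lam)^-1)) => //.
  by move=> k _; apply: ridge_coercive_pos.
subst lam; apply: (Ephys_path_bounds (kap := gam^-1)) => //.
- by rewrite invr_ge0 ltW.
- by rewrite (gtr0_norm gam_gt0) C_ge.
- by move=> k /gam_le; apply: ridge_coercive_sigma_min.
Qed.
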